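(* In the setting below, $\kappa_0=\rho$, and for every $\alpha\in\mathbb{N}^N$ with $|\alpha|\ge1$, \[ |\kappa_\alpha|\le(|\alpha|+1)^{|\alpha|}\lambda^{|\alpha|}\rho^{|V(\alpha)|}. \]
   Context: Let $n\ge1$, $\lambda\ge0$, $\rho\in(0,1)$, $v\in\{0,1\}^n$ with i.i.d. $\mathrm{Bernoulli}(\rho)$ entries, $N=n(n+1)/2$ indexed by pairs $(i,j)$ with $1\le i\le j\le n$, $X_{ij}=\lambda v_iv_j$, and $x=v_1$. An index $\alpha=(\alpha_{ij})_{i\le j}\in\mathbb{N}^N$ is viewed as a multigraph on vertex set $[n]$ (self-loops allowed) with $\alpha_{ij}$ edges between $i$ and $j$; $|\alpha|$ is its number of edges and $V(\alpha)$ the set of vertices spanned by its edges. $\kappa_\alpha$ is defined recursively by $\kappa_\alpha=\mathbb{E}[xX^\alpha]-\sum_{0\le\beta\lneq\alpha}\kappa_\beta\binom{\alpha}{\beta}\mathbb{E}[X^{\alpha-\beta}]$, with multi-index notation $X^\alpha=\prod X_{ij}^{\alpha_{ij}}$, $\binom{\alpha}{\beta}=\prod\binom{\alpha_{ij}}{\beta_{ij}}$, $\beta\le\alpha$ entrywise, $\beta\lneq\alpha$ meaning $\beta\le\alpha$, $\beta\ne\alpha$. *)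

From HB Require Import structures.
From mathcomp Require Import all_boot all_order all_algebra.
From mathcomp Require Import reals.
Set Implicit Arguments. Unset Strict Implicit. Unset Printing Implicit Defensive.
Import Order.TTheory GRing.Theory Num.Theory.
Local Open Scope ring_scope.

Section Kappa.
Variables (R : realType) (n : nat) (lambda rho : R).

(* Index set {(i,j) : 1 <= i <= j <= n} (0-based here). *)
Definition Pair := {p : 'I_n * 'I_n | (p.1 <= p.2)%N}.
Definition pfst (p : Pair) : 'I_n := (val p).1.
Definition psnd (p : Pair) : 'I_n := (val p).2.

(* Multi-indices alpha in N^N, viewed as multigraphs. *)
Definition mindex := {ffun Pair -> nat}.

Definition msize (a : mindex) : nat := (\sum_(p : Pair) a p)%N.
Definition Vset (a : mindex) : {set 'I_n} :=
  [set i : 'I_n | [exists p : Pair, (a p != 0%N) && ((pfst p == i) || (psnd p == i))]].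

Definition mle (b a : mindex) : bool := [forall p, (b p <= a p)%N].
Definition msub (a b : mindex) : mindex := [ffun p => (a p - b p)%N].
Definition mbinom (a b : mindex) : nat := (\prod_(p : Pair) 'C(a p, b p))%N.

(* Sample space: v in {0,1}^n with i.i.d. Bernoulli(rho) entries *)
Definition outcome := {ffun 'I_n -> bool}.
Definition weight (v : outcome) : R :=
  \prod_(i : 'I_n) (if v i then rho else 1 - rho).
Definition Expect (f : outcome -> R) : R := \sum_(v : outcome) weight v * f v.

Definition Xij (v : outcome) (p : Pair) : R :=
  lambda * ((v (pfst p))%:R * (v (psnd p))%:R).
Definition Xpow (a : mindex) (v : outcome) : R := \prod_(p : Pair) Xij v p ^+ a p.

Definition strict_lowers (a : mindex) : seq mindex :=
  [seq b <- [seq [ffun p => nat_of_ord (c p)] | c : {ffun Pair -> 'I_(msize a).+1} <- enum {ffun Pair -> 'I_(msize a).+1}]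
     | mle b a && (b != a)].

(* x = v_1, given as the index i0 *)
Variable i0 : 'I_n.
Definition xv (v : outcome) : R := (v i0)%:R.

(* recursion with fuel; kappa_alpha uses fuel |alpha|+1, which suffices since
   |beta| < |alpha| for beta < alpha *)
Fixpoint kap (k : nat) (a : mindex) : R :=
  match k with
  | 0 => 0
  | k'.+1 => Expect (fun v => xv v * Xpow a v)
             - \sum_(b <- strict_lowers a)
                 kap k' b * (mbinom a b)%:R * Expect (Xpow (msub a b))
  end.

Definition kappa (a : mindex) : R := kap (msize a).+1 a.

End Kappa.

From HB Require Import structures.
From mathcomp Require Import all_boot all_order all_algebra.
From mathcomp Require Import reals ring.
Import Order.TTheory GRing.Theory Num.Theory.
Set Implicit Arguments. Unset Strict Implicit. Unset Printing Implicit Defensive.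

(* Write m = |alpha| and B(alpha) = lambda^m rho^|V(alpha)|.  Since X^alpha
   vanishes unless every vertex of V(alpha) is present and is at most
   lambda^m otherwise, both E[X^alpha] and |E[x X^alpha]| are bounded by
   B(alpha).  For beta < alpha we have |beta| < m, |beta| + |alpha-beta| = m
   and V(alpha) is covered by V(beta) and V(alpha-beta); so by induction each
   term of the recursion is at most binom(alpha,beta) m^|beta| B(alpha).
   The binomial theorem applied edge by edge gives
   sum_(beta <= alpha) binom(alpha,beta) m^|beta| = (m+1)^m, whose summand
   at beta = alpha is m^m >= 1, whence |kappa_alpha| <= (m+1)^m B(alpha). *)

Lemma msize_ge n (a : mindex n) p : (a p <= msize a)%N.
Proof. by rewrite /msize (bigD1 p) //= leq_addr. Qed.

Lemma sum_binomial_weights n (a : mindex n) (N x : nat) :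
  (forall p, a p <= N)%N ->
  (\sum_(c : {ffun Pair n -> 'I_N.+1}) \prod_p ('C(a p, c p) * x ^ c p))%N
    = (x.+1 ^ msize a)%N.
Proof.
move=> aN.
rewrite -(bigA_distr_bigA (fun p (j : 'I_N.+1) => 'C(a p, j) * x ^ j)%N).
rewrite /msize expn_sum; apply: eq_big => // p _.
rewrite -[x.+1]/(1 + x)%N expnDn.
rewrite (big_ord_widen _ (fun i => 'C(a p, i) * (1 ^ (a p - i) * x ^ i))%N
  (_ : (a p).+1 <= N.+1)%N) ?ltnS // [RHS]big_mkcond /=.
apply: eq_bigr => i _; rewrite exp1n mul1n.
by case: ifP => // hi; rewrite bin_small // ltnNge -ltnS hi.
Qed.

Lemma strict_lowers_weight n (a : mindex n) :
  (1 + \sum_(b <- strict_lowers a) mbinom a b * msize a ^ msize b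
     <= (msize a).+1 ^ msize a)%N.
Proof.
set m := msize a.
pose T := {ffun Pair n -> 'I_m.+1}.
pose g (c : T) : mindex n := [ffun p => nat_of_ord (c p)].
pose w (c : T) := (\prod_(p : Pair n) ('C(a p, c p) * m ^ c p))%N.
pose top : T := [ffun p => inord (a p)].
have g_top : g top = a.
  by apply/ffunP => p; rewrite !ffunE inordK // ltnS msize_ge.
have w_g c : (mbinom a (g c) * m ^ msize (g c))%N = w c.
  rewrite /w big_split /= /mbinom /msize expn_sum.
  by congr (_ * _)%N; apply: eq_bigr => p _; rewrite ffunE.
have w_top : w top = (m ^ m)%N.
  by rewrite -w_g g_top /mbinom big1 ?mul1n // => p _; exact: binn.
have strict_le : (\sum_(b <- strict_lowers a) mbinom a b * m ^ msize b
                  <= \sum_(c <- enum T | c != top) w c)%N.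
  rewrite /strict_lowers big_filter big_map big_mkcond [X in (_ <= X)%N]big_mkcond.
  apply: leq_sum => c _; case: ifP => // /andP [_ c_ne]; rewrite w_g.
  case: ifP => // /eqP c_top; move: c_ne.
  by rewrite c_top -[X in X != _]/(g top) g_top eqxx.
have total : (\sum_(c <- enum T | c != top) w c + m ^ m = m.+1 ^ m)%N.
  rewrite -(@sum_binomial_weights _ a m m (msize_ge a)) (bigD1 top) //= addnC -w_top.
  by rewrite big_enum_cond.
have m_pos : (1 <= m ^ m)%N by rewrite expn_gt0; case: posnP => // ->.
by rewrite -total addnC leq_add.
Qed.

Lemma msize_sub n (a b : mindex n) :
  mle b a -> (msize b + msize (msub a b) = msize a)%N.
Proof.
move=> /forallP ba; rewrite /msize -big_split; apply: eq_bigr => p _.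
by rewrite /= ffunE subnKC.
Qed.

Lemma msize_lt n (a b : mindex n) : mle b a -> b != a -> (msize b < msize a)%N.
Proof.
move=> /forallP ba b_ne.
have [p bp_ne | b_eq] := pickP (fun p => b p != a p); last first.
  suff b_a : b = a by rewrite b_a eqxx in b_ne.
  by apply/ffunP => p; apply/eqP; move/negbFE: (b_eq p).
have bp_lt : (b p < a p)%N by rewrite ltn_neqAle bp_ne ba.
rewrite /msize (bigD1 p) // [X in (_ < X)%N](bigD1 p) //.
by rewrite -addSn leq_add // leq_sum.
Qed.

Lemma Vset_sub n (a b : mindex n) : mle b a ->
  (#|Vset a| <= #|Vset b| + #|Vset (msub a b)|)%N.
Proof.
move=> ba; apply: leq_trans (leq_card_setU _ _).
apply: subset_leq_card; apply/subsetP => i.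
rewrite !inE => /existsP [p /andP [ap_ne ip]].
have [bp_0 | bp_ne] := eqVneq (b p) 0%N.
  by apply/orP; right; apply/existsP; exists p; rewrite ip andbT ffunE bp_0 subn0.
by apply/orP; left; apply/existsP; exists p; rewrite ip bp_ne.
Qed.

Local Open Scope ring_scope.

Lemma kapS (R : realType) n (lambda rho : R) (i0 : 'I_n) k (a : mindex n) :
  kap lambda rho i0 k.+1 a =
    Expect rho (fun v => xv R i0 v * Xpow lambda a v)
    - \sum_(b <- strict_lowers a)
        kap lambda rho i0 k b * (mbinom a b)%:R * Expect rho (Xpow lambda (msub a b)).
Proof. by []. Qed.

Section Moments.
Variables (R : realType) (n : nat).

Definition ind (S : {set 'I_n}) (v : outcome n) : R :=
  \prod_i (if i \in S then (v i)%:R else 1).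

Lemma ind_ge0 S (v : outcome n) : 0 <= ind S v.
Proof. by apply: prodr_ge0 => i _; case: ifP => // _; exact: ler0n. Qed.

(* By independence, the vertices of S are all present with probability
   rho^|S|; this holds for every rho, as the weights are a product. *)
Lemma Expect_ind (rho : R) S : Expect rho (ind S) = rho ^+ #|S|.
Proof.
rewrite /Expect /weight /ind.
transitivity (\sum_(v : outcome n) \prod_i
   ((if v i then rho else 1 - rho) * (if i \in S then (v i)%:R else 1))).
  by apply: eq_bigr => v _; rewrite big_split.
rewrite -(bigA_distr_bigA (fun i (b : bool) =>
   (if b then rho else 1 - rho) * (if i \in S then b%:R else 1))).
rewrite -prodr_const [RHS]big_mkcond; apply: eq_bigr => i _ /=.
rewrite big_bool /=; case: ifP => _; rewrite ?mulr1 ?mulr0 ?addr0 //.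
by rewrite addrC subrK.
Qed.

Variables (lambda rho : R).
Hypotheses (lambda_ge0 : 0 <= lambda) (rho_ge0 : 0 <= rho) (rho_le1 : rho <= 1).

Lemma weight_ge0 (v : outcome n) : 0 <= weight rho v.
Proof. by apply: prodr_ge0 => i _; case: (v i); rewrite ?subr_ge0. Qed.

Lemma Expect_le (f g : outcome n -> R) :
  (forall v, f v <= g v) -> Expect rho f <= Expect rho g.
Proof. by move=> fg; apply: ler_sum => v _; apply: ler_wpM2l; rewrite ?weight_ge0. Qed.

Lemma Expect_ge0 (f : outcome n -> R) : (forall v, 0 <= f v) -> 0 <= Expect rho f.
Proof. by move=> f_ge0; apply: sumr_ge0 => v _; rewrite mulr_ge0 ?weight_ge0. Qed.

Lemma Expect_scale c (f : outcome n -> R) :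
  Expect rho (fun v => c * f v) = c * Expect rho f.
Proof. by rewrite /Expect mulr_sumr; apply: eq_bigr => v _; rewrite mulrCA. Qed.

Lemma Xij_bounds (v : outcome n) p : 0 <= Xij lambda v p <= lambda.
Proof.
by rewrite /Xij; case: (v _); case: (v _); rewrite /= ?(mulr1, mulr0, mul0r) ?lexx ?lambda_ge0.
Qed.

Lemma Xpow_ge0 (a : mindex n) (v : outcome n) : 0 <= Xpow lambda a v.
Proof. by apply: prodr_ge0 => p _; apply: exprn_ge0; case/andP: (Xij_bounds v p). Qed.

Lemma Xpow_le (a : mindex n) (v : outcome n) :
  Xpow lambda a v <= lambda ^+ msize a * ind (Vset a) v.
Proof.
have [all_in | ] := boolP [forall i in Vset a, v i].
  have -> : ind (Vset a) v = 1.
    rewrite /ind big1 // => i _; case: ifP => // iV.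
    by move/forall_inP: all_in => /(_ i iV) ->.
  rewrite mulr1 /msize -prodrXr; apply: ler_prod => p _.
  have /andP [X_ge0 X_le] := Xij_bounds v p.
  by rewrite exprn_ge0 //= lerXn2r ?nnegrE.
move/forall_inPn => [i iV v_i]; rewrite inE in iV.
have /existsP [p /andP [ap_ne ip]] := iV.
suff -> : Xpow lambda a v = 0 by rewrite mulr_ge0 ?exprn_ge0 ?ind_ge0.
rewrite /Xpow (bigD1 p) //= (_ : Xij lambda v p = 0) ?expr0n ?(negbTE ap_ne) ?mul0r //.
by rewrite /Xij; case/orP: ip => /eqP ->; rewrite (negbTE v_i) /= ?(mulr0, mul0r).
Qed.

Lemma Expect_Xpow_bounds (a : mindex n) :
  0 <= Expect rho (Xpow lambda a) <= lambda ^+ msize a * rho ^+ #|Vset a|.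
Proof.
rewrite Expect_ge0 /=; last by move=> v; exact: Xpow_ge0.
by rewrite -Expect_ind -Expect_scale; apply: Expect_le => v; exact: Xpow_le.
Qed.

(* The same bound for the mixed moment E[x X^alpha], as 0 <= x <= 1. *)
Lemma Expect_xXpow_bound (i0 : 'I_n) (a : mindex n) :
  `|Expect rho (fun v => xv R i0 v * Xpow lambda a v)|
    <= lambda ^+ msize a * rho ^+ #|Vset a|.
Proof.
have xX_bounds (v : outcome n) : 0 <= xv R i0 v * Xpow lambda a v <= Xpow lambda a v.
  by rewrite /xv; case: (v i0); rewrite /= ?mul1r ?mul0r ?lexx ?Xpow_ge0.
rewrite ger0_norm; last by apply: Expect_ge0 => v; case/andP: (xX_bounds v).
apply: le_trans (proj2 (andP (Expect_Xpow_bounds a))).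
by apply: Expect_le => v; case/andP: (xX_bounds v).
Qed.

Definition kbound (a : mindex n) : R :=
  ((msize a).+1)%:R ^+ msize a * lambda ^+ msize a * rho ^+ #|Vset a|.

Lemma lower_term_bound (i0 : 'I_n) k (a b : mindex n) :
  mle b a -> b != a -> `|kap lambda rho i0 k b| <= kbound b ->
  `|kap lambda rho i0 k b * (mbinom a b)%:R * Expect rho (Xpow lambda (msub a b))|
    <= (mbinom a b * msize a ^ msize b)%:R * (lambda ^+ msize a * rho ^+ #|Vset a|).
Proof.
move=> ba b_ne kap_b.
have /andP [E_ge0 E_le] := Expect_Xpow_bounds (msub a b).
rewrite !normrM (ger0_norm (ler0n _ _)) (ger0_norm E_ge0).
apply: le_trans (_ : kbound b * (mbinom a b)%:R *
    (lambda ^+ msize (msub a b) * rho ^+ #|Vset (msub a b)|) <= _).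
  by rewrite ler_pM ?mulr_ge0 // ler_pM.
have regroup (c l1 r1 d l2 r2 : R) :
    c * l1 * r1 * d * (l2 * r2) = d * c * (l1 * l2) * (r1 * r2) by ring.
have -> : kbound b * (mbinom a b)%:R *
    (lambda ^+ msize (msub a b) * rho ^+ #|Vset (msub a b)|) =
    (mbinom a b)%:R * ((msize b).+1)%:R ^+ msize b *
    lambda ^+ (msize b + msize (msub a b)) *
    rho ^+ (#|Vset b| + #|Vset (msub a b)|) by rewrite /kbound !exprD regroup.
have base_le : ((msize b).+1 ^ msize b <= msize a ^ msize b)%N.
  by case: (posnP (msize b)) => [->|b_pos]; rewrite ?expn0 // leq_exp2r ?msize_lt.
have rho_le : rho ^+ (#|Vset b| + #|Vset (msub a b)|) <= rho ^+ #|Vset a|.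
  by rewrite ler_wiXn2l // Vset_sub.
rewrite msize_sub // natrM natrX -!mulrA ler_wpM2l //.
apply: ler_pM; rewrite ?mulr_ge0 ?exprn_ge0 //.
- by rewrite -!natrX ler_nat.
- by rewrite ler_wpM2l ?exprn_ge0.
Qed.

Lemma kap_bound (i0 : 'I_n) k (a : mindex n) :
  `|kap lambda rho i0 k a| <= kbound a.
Proof.
elim: k a => [|k IH] a; first by rewrite normr0 /kbound !mulr_ge0 ?exprn_ge0.
rewrite kapS; set C := lambda ^+ msize a * rho ^+ #|Vset a|.
apply: le_trans (ler_normB _ _) _.
apply: le_trans (lerD (Expect_xXpow_bound i0 a) (ler_norm_sum _ _ _)) _.
apply: le_trans (lerD (lexx C) (_ : _ <= \sum_(b <- strict_lowers a)
     (mbinom a b * msize a ^ msize b)%:R * C)) _.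
  rewrite big_seq [X in _ <= X]big_seq; apply: ler_sum => b.
  by rewrite mem_filter => /andP [/andP [ba b_ne] _]; apply: lower_term_bound.
rewrite -mulr_suml -natr_sum -[X in X + _]mul1r -mulrDl /kbound -natrX -mulrA.
rewrite ler_wpM2r ?mulr_ge0 ?exprn_ge0 //.
by rewrite -[1]/(1%:R) -natrD ler_nat; exact: strict_lowers_weight.
Qed.

End Moments.

(* kappa_0 = E[x] = rho, since the recursion at alpha = 0 has no lower terms. *)
Lemma kappa_zero (R : realType) n (lambda rho : R) (i0 : 'I_n) :
  kappa lambda rho i0 [ffun _ => 0%N] = rho.
Proof.
set z : mindex n := [ffun _ => 0%N].
have z_size : msize z = 0%N by rewrite /msize big1 // => p _; rewrite ffunE.
rewrite /kappa z_size kapS big1 ?subr0; last by move=> b _; rewrite !mul0r.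
have -> : Expect rho (fun v => xv R i0 v * Xpow lambda z v) = Expect rho (ind R [set i0]).
  apply: eq_bigr => v _; congr (_ * _).
  rewrite /Xpow big1 ?mulr1; last by move=> p _; rewrite ffunE expr0.
  by rewrite /ind -big_mkcond big_set1.
by rewrite Expect_ind cards1 expr1.
Qed.

Theorem mainTheorem6 (R : realType) (n : nat) (hn : (0 < n)%N)
  (lambda rho : R) (hl : 0 <= lambda) (hr0 : 0 < rho) (hr1 : rho < 1) :
  kappa lambda rho (Ordinal hn) [ffun _ => 0%N] = rho /\
  forall a : mindex n, (1 <= msize a)%N ->
    `|kappa lambda rho (Ordinal hn) a|
      <= ((msize a).+1)%:R ^+ msize a * lambda ^+ msize a * rho ^+ #|Vset a|.
Proof.
split; first exact: kappa_zero.
by move=> a _; apply: kap_bound => //; apply: ltW.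
Qed.
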